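(* Let $R$ be a ring. If $Q_l(R)$ is a left artinian ring, then $S_0(R)=\mathcal C_R$ (in particular $\mathcal C_R$ is a left Ore set) and $Q_{cl}(R)=Q_l(R)$.
   Context: Rings are associative with $1$. $\mathcal C_R$ is the set of regular elements of $R$. A multiplicatively closed subset $S$ ($1\in S$, $0\notin S$) is a left Ore set if $Sr\cap Rs\ne\emptyset$ for all $r\in R,s\in S$, and a left denominator set if moreover $rs=0$ ($s\in S$) implies $tr=0$ for some $t\in S$. $S_0(R)$ is the largest left denominator set of $R$ contained in $\mathcal C_R$ (it exists), $Q_l(R):=S_0(R)^{-1}R$, and $Q_{cl}(R):=\mathcal C_R^{-1}R$ is the classical left quotient ring. *)

From mathcomp Require Import all_boot all_algebra.
Set Implicit Arguments. Unset Strict Implicit. Unset Printing Implicit Defensive.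
Import GRing.Theory.
Local Open Scope ring_scope.

Definition regular (R : nzRingType) (c : R) : Prop :=
  (forall x : R, c * x = 0 -> x = 0) /\ (forall x : R, x * c = 0 -> x = 0).

Definition mult_closed (R : nzRingType) (S : R -> Prop) : Prop :=
  [/\ S 1, (forall s t, S s -> S t -> S (s * t)) & ~ S 0].

Definition left_Ore (R : nzRingType) (S : R -> Prop) : Prop :=
  mult_closed S /\
  (forall (r s : R), S s -> exists s' r', S s' /\ s' * r = r' * s).

Definition left_denominator (R : nzRingType) (S : R -> Prop) : Prop :=
  left_Ore S /\
  (forall (r s : R), S s -> r * s = 0 -> exists t, S t /\ t * r = 0).

Definition largest_left_denominator_in_regular (R : nzRingType) (S0 : R -> Prop)
  : Prop :=
  [/\ left_denominator S0, (forall x, S0 x -> regular x) &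
      (forall S : R -> Prop, left_denominator S ->
         (forall x, S x -> regular x) -> forall x, S x -> S0 x)].

(* f : R -> Q is a left ring of fractions S^{-1}R of R w.r.t. S
   (characterization of S^{-1}R up to isomorphism). *)
Definition is_left_localization (R : nzRingType) (Q : unitRingType)
  (S : R -> Prop) (f : {rmorphism R -> Q}) : Prop :=
  [/\ (forall s, S s -> f s \is a GRing.unit),
      (forall q : Q, exists s r, S s /\ q = (f s)^-1 * f r) &
      (forall r, f r = 0 <-> exists s, S s /\ s * r = 0)].

Definition left_ideal (Q : nzRingType) (I : Q -> Prop) : Prop :=
  [/\ I 0, (forall x y, I x -> I y -> I (x + y)) &
      (forall a x, I x -> I (a * x))].

Definition left_artinian (Q : nzRingType) : Prop :=
  forall I : nat -> Q -> Prop,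
    (forall n, left_ideal (I n)) ->
    (forall n x, I n.+1 x -> I n x) ->
    exists n, forall m, (n <= m)%N -> forall x, I m x <-> I n x.

(* If c is regular in R, then f c is right regular in Q = S^-1 R: clearing the
   denominator of y with y * f c = 0 gives f (r c) = 0, so r c is killed by an
   element of S, and regularity of S and of c forces r = 0.  In a left artinian
   ring the chain Q x >= Q x^2 >= ... stabilises, so x^n = a x^(n+1), and right
   regularity cancels x^n to give a x = 1: hence f c is a unit.  Units of this
   kind make every left fraction f r (f c)^-1 a fraction (f s)^-1 f r' with s
   in S, which is the left Ore condition for C_R; as S consists of regular
   elements, C_R is then a left denominator set, so maximality gives S0 = C_R,
   and f is also the localization at C_R. *)
From mathcomp Require Import all_boot all_algebra.
Local Open Scope ring_scope.
Import GRing.Theory.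
Set Implicit Arguments. Unset Strict Implicit. Unset Printing Implicit Defensive.

Lemma left_artinian_pow_stable (Q : unitRingType) (x : Q) :
  left_artinian Q -> exists n (a : Q), x ^+ n = a * x ^+ n.+1.
Proof.
move=> artQ.
pose I n (y : Q) := exists a, y = a * x ^+ n.
have [||n In_stable] := artQ I.
- move=> n; split.
  + by exists 0; rewrite mul0r.
  + by move=> y z [a ->] [b ->]; exists (a + b); rewrite mulrDl.
  + by move=> a y [b ->]; exists (a * b); rewrite mulrA.
- by move=> n y [a ->]; exists (a * x); rewrite exprS !mulrA.
have [a x_n_eq] : I n.+1 (x ^+ n).
  by apply/(In_stable n.+1 (leqnSn n)); exists 1; rewrite mul1r.
by exists n, a.
Qed.

Lemma left_artinian_unit (Q : unitRingType) (x : Q) :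
  left_artinian Q -> (forall y : Q, y * x = 0 -> y = 0) -> x \is a GRing.unit.
Proof.
move=> artQ xreg.
have xpow_reg n (y : Q) : y * x ^+ n = 0 -> y = 0.
  elim: n y => [|n IHn] y; first by rewrite expr0 mulr1.
  by rewrite exprSr mulrA => /xreg /IHn.
have [n [a x_n_eq]] := left_artinian_pow_stable x artQ.
have ax1 : a * x = 1.
  apply/eqP; rewrite -subr_eq0; apply/eqP; apply: (xpow_reg n).
  by rewrite mulrBl mul1r {2}x_n_eq exprS !mulrA subrr.
apply/GRing.unitrP; exists a; split => //.
apply/eqP; rewrite -subr_eq0; apply/eqP; apply: xreg.
by rewrite mulrBl mul1r -mulrA ax1 mulr1 subrr.
Qed.

Lemma regular1 (R : nzRingType) : regular (1 : R).
Proof. by split=> x; rewrite ?mul1r ?mulr1. Qed.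

Lemma regular_mult_closed (R : nzRingType) : mult_closed (@regular R).
Proof.
split; first exact: regular1.
- move=> s t [s_lreg s_rreg] [t_lreg t_rreg]; split=> x.
    by rewrite -mulrA => /s_lreg /t_lreg.
  by rewrite mulrA => /t_rreg /s_rreg.
- move=> [lreg0 _]; have := lreg0 1; rewrite mul0r => /(_ erefl) /eqP.
  by rewrite oner_eq0.
Qed.

Lemma regular_left_denominator (R : nzRingType) :
  left_Ore (@regular R) -> left_denominator (@regular R).
Proof.
split=> // r s [_ s_rreg] rs0; exists 1; split; first exact: regular1.
by rewrite mul1r (s_rreg r rs0).
Qed.

Section LocalizationAtRegular.

Variables (R : nzRingType) (Q : unitRingType) (S : R -> Prop).
Variable f : {rmorphism R -> Q}.
Hypothesis S_regular : forall s, S s -> regular s.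
Hypothesis f_loc : is_left_localization S f.

Lemma localization_inj : injective f.
Proof.
have [_ _ kerf] := f_loc.
apply: raddf_inj => r /kerf [s [Ss sr0]].
exact: (proj1 (S_regular Ss)) r sr0.
Qed.

Lemma localization_regular_rreg (c : R) :
  regular c -> forall y : Q, y * f c = 0 -> y = 0.
Proof.
have [Sunit frac _] := f_loc.
move=> [_ c_rreg] y; have [s [r [Ss ->]]] := frac y.
have fs_unit := Sunit s Ss.
move=> yc0; have : f (r * c) = 0.
  by rewrite rmorphM -(mulVKr fs_unit (f r)) -mulrA yc0 mulr0.
by rewrite -(rmorph0 f) => /localization_inj /c_rreg ->; rewrite rmorph0 mulr0.
Qed.

Hypothesis regular_unit : forall c, regular c -> f c \is a GRing.unit.

Lemma localization_left_Ore_regular : left_Ore (@regular R).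
Proof.
split; first exact: regular_mult_closed.
have [Sunit frac _] := f_loc.
move=> r c creg.
have [s [r' [Ss frac_eq]]] := frac (f r * (f c)^-1).
exists s, r'; split; first exact: S_regular.
apply: localization_inj; rewrite !rmorphM.
have := congr1 (fun z => f s * z * f c) frac_eq => /=.
by rewrite -mulrA mulrVK ?regular_unit // mulrA mulrV ?Sunit // mul1r.
Qed.

Lemma localization_at_regular : is_left_localization (@regular R) f.
Proof.
have [_ frac kerf] := f_loc; split=> //.
- move=> q; have [s [r [Ss ->]]] := frac q.
  by exists s, r; split; first exact: S_regular.
- move=> r; split.
    by move=> /kerf [s [Ss sr0]]; exists s; split; first exact: S_regular.
  by move=> [s [[s_lreg _] sr0]]; rewrite (s_lreg r sr0) rmorph0.
Qed.

End LocalizationAtRegular.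

Theorem corollary2p10 (R : nzRingType) (S0 : R -> Prop)
  (Q : unitRingType) (f : {rmorphism R -> Q}) :
  largest_left_denominator_in_regular S0 ->
  is_left_localization S0 f ->
  left_artinian Q ->
  [/\ (forall x : R, S0 x <-> regular x),
      left_Ore (@regular R) &
      is_left_localization (@regular R) f].
Proof.
move=> [_ S0_regular S0_max] f_loc artQ.
have regular_unit c : regular c -> f c \is a GRing.unit.
  by move=> creg; apply: (left_artinian_unit artQ);
    exact: (localization_regular_rreg S0_regular f_loc creg).
have oreC := localization_left_Ore_regular S0_regular f_loc regular_unit.
split=> //; last exact: localization_at_regular S0_regular f_loc regular_unit.
move=> x; split; first exact: S0_regular.
exact: S0_max (regular_left_denominator oreC) (fun _ => id) x.
Qed.
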